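(* Let $a,b$ be real numbers with $b\ge a>1$. Then the functions $$W(t)=\sum_{j=0}^\infty a^{-j}\cos(b^jt),\qquad S(t)=\sum_{j=0}^\infty a^{-j}\sin(b^jt),\qquad t\in\mathbb{R},$$ are bounded and continuous on $\mathbb{R}$, but neither $W$ nor $S$ is differentiable at any point $t_0\in\mathbb{R}$. *)

From Stdlib Require Import Reals.
Open Scope R_scope.

Definition W_term (a b t : R) (j : nat) : R := / (a ^ j) * cos (b ^ j * t).
Definition S_term (a b t : R) (j : nat) : R := / (a ^ j) * sin (b ^ j * t).

Definition bounded_R (f : R -> R) : Prop := exists M : R, forall t : R, Rabs (f t) <= M.

Definition differentiable_at (f : R -> R) (x : R) : Prop :=
  exists l : R, derivable_pt_lim f x l.

From Stdlib Require Import Reals Lra Lia.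
From Coquelicot Require Import Coquelicot.
Open Scope R_scope.

(* W and S are the phases c = 0 and c = -π/2 of Σ_j a^-j cos (b^j t + c).  The geometric
   majorant Σ a^-j gives convergence, boundedness and continuity.  For nowhere
   differentiability take the kernel φ(u) = cos u / 2 + cos ((1+h) u) / 4 + cos ((1-h) u) / 4
   on [-L, L] with L = 2Kπ, h = 1/(2K): it annihilates affine functions, its cosine transform
   is L/2 at frequency 1 and is O(λ²) for λ <= 1/b and O(1/λ) for λ >= b, with constants
   O(1/K).  If f'(t0) = l, integrating f (t0 + (u + α)/b^k) - f t0 - l (u + α)/b^k against φ
   gives o(b^-k).  Expanding the series termwise, the term j = k contributes
   a^-k cos (b^k t0 + c + α) L/2 and, for K large, all other terms together at most a^-k.
   Since a <= b, this forces |cos (b^k t0 + c + α)| <= 3/L eventually, for α = 0 and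
   α = π/2 alike, which contradicts cos² + sin² = 1. *)

Lemma is_RInt_ext_val (f g : R -> R) (a b v w : R) :
  (forall x, f x = g x) -> v = w -> is_RInt f a b v -> is_RInt g a b w.
Proof. intros Hfg <-. apply (is_RInt_ext f); auto. Qed.

(* [int0_cos L mu] is [∫_0^L cos (mu u) du]. *)
Definition int0_cos (L mu : R) : R := if Req_EM_T mu 0 then L else sin (mu * L) / mu.

Lemma is_RInt_cos_affine (L th mu : R) :
  is_RInt (fun u => cos (th + mu * u)) (-L) L (2 * cos th * int0_cos L mu).
Proof.
  unfold int0_cos. destruct (Req_EM_T mu 0) as [->|Hmu].
  - apply is_RInt_ext_val with (fun _ => cos th) (scal (L - - L) (cos th)).
    + intros; f_equal; ring.
    + unfold scal; simpl; unfold mult; simpl; ring.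
    + exact (is_RInt_const (V:=R_NormedModule) (-L) L (cos th)).
  - set (F u := sin (th + mu * u) / mu).
    apply is_RInt_ext_val with (fun u => cos (th + mu * u)) (minus (F L) (F (-L))); auto.
    + unfold minus, plus, opp, F; simpl.
      replace (th + mu * - L) with (th - mu * L) by ring.
      rewrite sin_plus, sin_minus. field. auto.
    + apply (is_RInt_derive F).
      * intros x _. unfold F. auto_derive; auto. field. auto.
      * intros x _. apply (ex_derive_continuous (K:=R_AbsRing) (V:=R_NormedModule)).
        auto_derive. auto.
Qed.

Lemma is_RInt_id_mul_cos (L w : R) : w <> 0 ->
  is_RInt (fun u => u * cos (w * u)) (-L) L 0.
Proof.
  intros Hw. set (F u := u * sin (w * u) / w + cos (w * u) / (w * w)).
  apply is_RInt_ext_val with (fun u => u * cos (w * u)) (minus (F L) (F (-L))); auto.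
  - unfold minus, plus, opp, F; simpl.
    replace (w * - L) with (- (w * L)) by ring.
    rewrite sin_neg, cos_neg. field. auto.
  - apply (is_RInt_derive F).
    + intros x _. unfold F. auto_derive; auto. field. auto.
    + intros x _. apply (ex_derive_continuous (K:=R_AbsRing) (V:=R_NormedModule)).
      auto_derive. auto.
Qed.

Lemma cos_mul_cos_affine (w th lam u : R) :
  cos (w * u) * cos (th + lam * u) = /2 * (cos (th + (lam - w) * u) + cos (th + (lam + w) * u)).
Proof.
  replace (th + (lam - w) * u) with ((th + lam * u) - w * u) by ring.
  replace (th + (lam + w) * u) with ((th + lam * u) + w * u) by ring.
  rewrite (cos_minus (th + lam * u)), (cos_plus (th + lam * u)). field.
Qed.

Lemma is_RInt_cos_mul_cos_affine (L w th lam : R) :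
  is_RInt (fun u => cos (w * u) * cos (th + lam * u)) (-L) L
    (cos th * (int0_cos L (lam - w) + int0_cos L (lam + w))).
Proof.
  apply is_RInt_ext_val
    with (fun u => /2 * (cos (th + (lam - w) * u) + cos (th + (lam + w) * u)))
         (/2 * (2 * cos th * int0_cos L (lam - w) + 2 * cos th * int0_cos L (lam + w))).
  - intros; rewrite cos_mul_cos_affine; reflexivity.
  - field.
  - apply (is_RInt_scal (V:=R_NormedModule)), (is_RInt_plus (V:=R_NormedModule));
      apply is_RInt_cos_affine.
Qed.

Definition kernel (h u : R) : R := /2 * cos u + /4 * cos ((1 + h) * u) + /4 * cos ((1 - h) * u).

(* [kernel_ft L h lam] is [∫_{-L}^{L} kernel h u * cos (lam u) du]. *)
Definition kernel_ft (L h lam : R) : R :=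
  /2 * (int0_cos L (lam - 1) + int0_cos L (lam + 1))
  + /4 * (int0_cos L (lam - (1 + h)) + int0_cos L (lam + (1 + h)))
  + /4 * (int0_cos L (lam - (1 - h)) + int0_cos L (lam + (1 - h))).

Lemma Rabs_kernel_le (h u : R) : Rabs (kernel h u) <= 1.
Proof.
  unfold kernel. pose proof (COS_bound u). pose proof (COS_bound ((1 + h) * u)).
  pose proof (COS_bound ((1 - h) * u)). apply Rabs_le. lra.
Qed.

Lemma is_RInt_kernel_cos_affine (L h th lam : R) :
  is_RInt (fun u => kernel h u * cos (th + lam * u)) (-L) L (cos th * kernel_ft L h lam).
Proof.
  apply is_RInt_ext_val
    with (fun u => /2 * (cos (1 * u) * cos (th + lam * u))
                   + /4 * (cos ((1 + h) * u) * cos (th + lam * u))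
                   + /4 * (cos ((1 - h) * u) * cos (th + lam * u)))
         (/2 * (cos th * (int0_cos L (lam - 1) + int0_cos L (lam + 1)))
          + /4 * (cos th * (int0_cos L (lam - (1 + h)) + int0_cos L (lam + (1 + h))))
          + /4 * (cos th * (int0_cos L (lam - (1 - h)) + int0_cos L (lam + (1 - h))))).
  - intros u; unfold kernel; rewrite Rmult_1_l; ring.
  - unfold kernel_ft; ring.
  - apply (is_RInt_plus (V:=R_NormedModule)); [apply (is_RInt_plus (V:=R_NormedModule))|];
      apply (is_RInt_scal (V:=R_NormedModule)), is_RInt_cos_mul_cos_affine.
Qed.

Lemma is_RInt_cos_mul_affine (L w c0 c1 : R) : w <> 0 -> sin (w * L) = 0 ->
  is_RInt (fun u => cos (w * u) * (c0 + c1 * u)) (-L) L 0.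
Proof.
  intros Hw Hs.
  apply is_RInt_ext_val with (fun u => c0 * cos (0 + w * u) + c1 * (u * cos (w * u)))
    (c0 * (2 * cos 0 * int0_cos L w) + c1 * 0).
  - intros u. rewrite Rplus_0_l. ring.
  - unfold int0_cos. destruct (Req_EM_T w 0); [contradiction|]. rewrite Hs. field. auto.
  - apply (is_RInt_plus (V:=R_NormedModule)); apply (is_RInt_scal (V:=R_NormedModule));
      [apply is_RInt_cos_affine | apply is_RInt_id_mul_cos; auto].
Qed.

Lemma is_RInt_kernel_affine (L h c0 c1 : R) : 0 < h < 1 ->
  sin L = 0 -> sin ((1 + h) * L) = 0 -> sin ((1 - h) * L) = 0 ->
  is_RInt (fun u => kernel h u * (c0 + c1 * u)) (-L) L 0.
Proof.
  intros Hh H1 H2 H3.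
  apply is_RInt_ext_val
    with (fun u => /2 * (cos (1 * u) * (c0 + c1 * u)) + /4 * (cos ((1 + h) * u) * (c0 + c1 * u))
                   + /4 * (cos ((1 - h) * u) * (c0 + c1 * u)))
         (/2 * 0 + /4 * 0 + /4 * 0).
  - intros u; unfold kernel; rewrite Rmult_1_l; ring.
  - ring.
  - apply (is_RInt_plus (V:=R_NormedModule)); [apply (is_RInt_plus (V:=R_NormedModule))|];
      apply (is_RInt_scal (V:=R_NormedModule)), is_RInt_cos_mul_affine;
      rewrite ?Rmult_1_l; auto; lra.
Qed.

Lemma sin_sub_PI (x : R) : sin (x - PI) = - sin x.
Proof. rewrite sin_minus, sin_PI, cos_PI. ring. Qed.

Definition kernel_ft_formula (h lam s : R) : R :=
  - s * (lam * (h * h) * (lam * lam + 3 - h * h))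
  / ((lam * lam - 1) * (lam * lam - (1 + h) * (1 + h)) * (lam * lam - (1 - h) * (1 - h))).

(* With [L = 2Kπ] and [h L = π], the frequencies [1] and [1 ± h] each complete a whole
   number of periods on [[-L, L]]: the kernel annihilates affine functions and its
   transform is explicit. *)
Section ResonantKernel.
Variable K : nat.
Hypothesis HK : (1 <= K)%nat.
Let L := 2 * INR K * PI.
Let h := / (2 * INR K).

Lemma INR_K_ge1 : 1 <= INR K.
Proof. apply (le_INR 1). exact HK. Qed.

Lemma h_pos : 0 < h.
Proof. unfold h. pose proof INR_K_ge1. apply Rinv_0_lt_compat. lra. Qed.

Lemma h_le_half : h <= /2.
Proof. unfold h. pose proof INR_K_ge1. apply Rinv_le_contravar; lra. Qed.

Lemma L_pos : 0 < L.
Proof. unfold L. pose proof INR_K_ge1. pose proof PI_RGT_0. nra. Qed.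

Lemma h_mul_L : h * L = PI.
Proof. unfold h, L. pose proof INR_K_ge1. field. lra. Qed.

Lemma sin_add_L (x : R) : sin (x + L) = sin x.
Proof. apply sin_period. Qed.

Lemma sin_sub_L (x : R) : sin (x - L) = sin x.
Proof. rewrite <- (sin_add_L (x - L)). f_equal; ring. Qed.

Lemma sin_add_1ph_L (x : R) : sin (x + (1 + h) * L) = - sin x.
Proof.
  replace (x + (1 + h) * L) with ((x + L) + PI) by (rewrite <- h_mul_L; ring).
  rewrite neg_sin, sin_add_L. reflexivity.
Qed.

Lemma sin_sub_1ph_L (x : R) : sin (x - (1 + h) * L) = - sin x.
Proof.
  replace (x - (1 + h) * L) with ((x - L) - PI) by (rewrite <- h_mul_L; ring).
  rewrite sin_sub_PI, sin_sub_L. reflexivity.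
Qed.

Lemma sin_add_1mh_L (x : R) : sin (x + (1 - h) * L) = - sin x.
Proof.
  replace (x + (1 - h) * L) with ((x + L) - PI) by (rewrite <- h_mul_L; ring).
  rewrite sin_sub_PI, sin_add_L. reflexivity.
Qed.

Lemma sin_sub_1mh_L (x : R) : sin (x - (1 - h) * L) = - sin x.
Proof.
  replace (x - (1 - h) * L) with ((x - L) + PI) by (rewrite <- h_mul_L; ring).
  rewrite neg_sin, sin_sub_L. reflexivity.
Qed.

Lemma is_RInt_resonant_kernel_affine (c0 c1 : R) :
  is_RInt (fun u => kernel h u * (c0 + c1 * u)) (-L) L 0.
Proof.
  pose proof h_pos; pose proof h_le_half.
  apply is_RInt_kernel_affine; [lra | | |].
  - rewrite <- (Rplus_0_l L), sin_add_L. apply sin_0.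
  - rewrite <- (Rplus_0_l ((1 + h) * L)), sin_add_1ph_L, sin_0. ring.
  - rewrite <- (Rplus_0_l ((1 - h) * L)), sin_add_1mh_L, sin_0. ring.
Qed.

Lemma kernel_ft_1 : kernel_ft L h 1 = L / 2.
Proof.
  pose proof h_pos. pose proof h_le_half.
  unfold kernel_ft, int0_cos.
  destruct (Req_EM_T (1 - 1) 0); [|lra].
  destruct (Req_EM_T (1 + 1) 0); [lra|].
  destruct (Req_EM_T (1 - (1 + h)) 0); [lra|].
  destruct (Req_EM_T (1 + (1 + h)) 0); [lra|].
  destruct (Req_EM_T (1 - (1 - h)) 0); [lra|].
  destruct (Req_EM_T (1 + (1 - h)) 0); [lra|].
  replace ((1 + 1) * L) with (0 + L + L) by ring.
  replace ((1 - (1 + h)) * L) with (0 - h * L) by ring.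
  replace ((1 + (1 + h)) * L) with ((0 + L) + (1 + h) * L) by ring.
  replace ((1 - (1 - h)) * L) with (0 + h * L) by ring.
  replace ((1 + (1 - h)) * L) with ((0 + L) + (1 - h) * L) by ring.
  rewrite h_mul_L, sin_add_1ph_L, sin_add_1mh_L, !sin_add_L, sin_sub_PI, neg_sin, sin_0.
  field. split; lra.
Qed.

Lemma kernel_ft_closed (lam : R) : 0 < lam -> lam <> 1 -> lam <> 1 + h -> lam <> 1 - h ->
  kernel_ft L h lam = kernel_ft_formula h lam (sin (lam * L)).
Proof.
  intros H0 H1 H2 H3. pose proof h_pos. pose proof h_le_half.
  unfold kernel_ft, kernel_ft_formula, int0_cos.
  destruct (Req_EM_T (lam - 1) 0); [lra|].
  destruct (Req_EM_T (lam + 1) 0); [lra|].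
  destruct (Req_EM_T (lam - (1 + h)) 0); [lra|].
  destruct (Req_EM_T (lam + (1 + h)) 0); [lra|].
  destruct (Req_EM_T (lam - (1 - h)) 0); [lra|].
  destruct (Req_EM_T (lam + (1 - h)) 0); [lra|].
  replace ((lam - 1) * L) with (lam * L - L) by ring.
  replace ((lam + 1) * L) with (lam * L + L) by ring.
  replace ((lam - (1 + h)) * L) with (lam * L - (1 + h) * L) by ring.
  replace ((lam + (1 + h)) * L) with (lam * L + (1 + h) * L) by ring.
  replace ((lam - (1 - h)) * L) with (lam * L - (1 - h) * L) by ring.
  replace ((lam + (1 - h)) * L) with (lam * L + (1 - h) * L) by ring.
  rewrite sin_add_1ph_L, sin_sub_1ph_L, sin_add_1mh_L, sin_sub_1mh_L, sin_add_L, sin_sub_L.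
  assert (lam * lam - 1 <> 0) by
    (replace (lam * lam - 1) with ((lam - 1) * (lam + 1)) by ring; apply Rmult_integral_contrapositive; lra).
  assert (lam * lam - (1 + h) * (1 + h) <> 0) by
    (replace (lam * lam - (1 + h) * (1 + h)) with ((lam - (1 + h)) * (lam + (1 + h))) by ring;
     apply Rmult_integral_contrapositive; lra).
  assert (lam * lam - (1 - h) * (1 - h) <> 0) by
    (replace (lam * lam - (1 - h) * (1 - h)) with ((lam - (1 - h)) * (lam + (1 - h))) by ring;
     apply Rmult_integral_contrapositive; lra).
  field. repeat split; lra.
Qed.

End ResonantKernel.

Lemma Rdiv_le_compat (X X' Y Y' : R) : 0 <= X <= X' -> 0 < Y' <= Y -> X / Y <= X' / Y'.
Proof.
  intros [H1 H2] [H3 H4]. unfold Rdiv.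
  apply Rmult_le_compat; try lra.
  - left; apply Rinv_0_lt_compat; lra.
  - apply Rinv_le_contravar; lra.
Qed.

Lemma Rabs_kernel_ft_formula_low (b h lam s L : R) : 1 < b -> 0 < h <= /2 -> 0 < L ->
  (1 + / (b * b)) / 2 <= (1 - h) * (1 - h) -> 0 < lam <= / b -> Rabs s <= lam * L ->
  Rabs (kernel_ft_formula h lam s)
  <= 8 * L * (h * h) / ((1 - / (b * b)) * (1 - / (b * b)) * (1 - / (b * b))) * (lam * lam).
Proof.
  intros Hb Hh HL Hh2 Hlam Hs. unfold kernel_ft_formula.
  set (q := / (b * b)) in *.
  assert (Hq0 : 0 < q) by (unfold q; apply Rinv_0_lt_compat; nra).
  assert (Hq1 : q < 1) by (unfold q; rewrite <- Rinv_1; apply Rinv_lt_contravar; nra).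
  assert (Hl2 : lam * lam <= q).
  { unfold q. rewrite Rinv_mult. apply Rmult_le_compat; lra. }
  set (A := 1 - lam * lam). set (B := (1 + h) * (1 + h) - lam * lam).
  set (D := (1 - h) * (1 - h) - lam * lam).
  set (X := lam * (h * h) * (lam * lam + 3 - h * h)).
  assert (HA : 1 - q <= A) by (unfold A; lra).
  assert (HB : A <= B) by (unfold A, B; nra).
  assert (HD : (1 - q) / 2 <= D) by (unfold D; lra).
  assert (HX : 0 <= X <= lam * (h * h) * 4).
  { unfold X. split; [apply Rmult_le_pos; [apply Rmult_le_pos|]; nra|].
    apply Rmult_le_compat_l; nra. }
  assert (HABD : 0 < A * B * D) by (apply Rmult_lt_0_compat; [apply Rmult_lt_0_compat|]; lra).
  assert (E : - s * X / ((lam * lam - 1) * (lam * lam - (1 + h) * (1 + h))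
                        * (lam * lam - (1 - h) * (1 - h))) = s * (X / (A * B * D))).
  { unfold A, B, D. field. repeat split; nra. }
  rewrite E, Rabs_mult, (Rabs_pos_eq (X / _))
    by (apply Rmult_le_pos; [lra|left; apply Rinv_0_lt_compat; lra]).
  apply Rle_trans with (lam * L * (lam * (h * h) * 4 / ((1 - q) * (1 - q) * ((1 - q) / 2)))).
  - apply Rmult_le_compat; [apply Rabs_pos| |exact Hs|].
    + apply Rmult_le_pos; [lra|left; apply Rinv_0_lt_compat; lra].
    + apply Rdiv_le_compat; [lra|split].
      * apply Rmult_lt_0_compat; [apply Rmult_lt_0_compat|]; lra.
      * apply Rmult_le_compat; try lra; [apply Rmult_le_pos; lra | apply Rmult_le_compat; lra].
  - right. field. lra.
Qed.

Lemma Rabs_kernel_ft_formula_high (b h lam s : R) : 1 < b -> 0 < h <= /2 ->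
  (1 + h) * (1 + h) <= (1 + b * b) / 2 -> b <= lam -> Rabs s <= 1 ->
  Rabs (kernel_ft_formula h lam s)
  <= 8 * (h * h) / ((1 - / (b * b)) * (1 - / (b * b)) * (1 - / (b * b))) / lam.
Proof.
  intros Hb Hh Hh2 Hlam Hs. unfold kernel_ft_formula.
  set (q := / (b * b)) in *.
  assert (Hq0 : 0 < q) by (unfold q; apply Rinv_0_lt_compat; nra).
  assert (Hq1 : q < 1) by (unfold q; rewrite <- Rinv_1; apply Rinv_lt_contravar; nra).
  assert (Hqb : q * (b * b) = 1) by (unfold q; field; lra).
  set (m := lam * lam).
  assert (Hm : b * b <= m) by (unfold m; nra).
  assert (Hqm : 1 <= q * m) by nra.
  assert (Hm1 : 1 < m) by nra.
  set (A := m - 1). set (B := m - (1 + h) * (1 + h)). set (D := m - (1 - h) * (1 - h)).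
  set (X := lam * (h * h) * (m + 3 - h * h)).
  assert (HA : (1 - q) * m <= A) by (unfold A; nra).
  assert (HB : (1 - q) * m / 2 <= B) by (unfold B; nra).
  assert (HD : A <= D) by (unfold A, D; nra).
  assert (HX : 0 <= X <= lam * (h * h) * (4 * m)).
  { unfold X. split; [apply Rmult_le_pos; [apply Rmult_le_pos|]; nra|].
    apply Rmult_le_compat_l; nra. }
  assert (HABD : 0 < A * B * D) by (apply Rmult_lt_0_compat; [apply Rmult_lt_0_compat|]; nra).
  replace (- s * X / (A * B * D)) with (- s * (X / (A * B * D))) by (unfold Rdiv; ring).
  rewrite Rabs_mult, Rabs_Ropp, (Rabs_pos_eq (X / _))
    by (apply Rmult_le_pos; [lra|left; apply Rinv_0_lt_compat; lra]).
  apply Rle_trans with (1 * (lam * (h * h) * (4 * m) / (((1 - q) * m) * ((1 - q) * m / 2) * ((1 - q) * m)))).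
  - apply Rmult_le_compat; [apply Rabs_pos| |exact Hs|].
    + apply Rmult_le_pos; [lra|left; apply Rinv_0_lt_compat; lra].
    + apply Rdiv_le_compat; [lra|split].
      * apply Rmult_lt_0_compat; [apply Rmult_lt_0_compat|]; nra.
      * apply Rmult_le_compat; try nra; [apply Rmult_le_pos; nra | apply Rmult_le_compat; nra].
  - apply Rle_trans with (8 * (h * h) / ((1 - q) * (1 - q) * (1 - q)) / (lam * m)).
    + right. unfold m. field. repeat split; lra.
    + apply Rdiv_le_compat; [split|unfold m; split; nra].
      * apply Rmult_le_pos; [nra|left; apply Rinv_0_lt_compat].
        apply Rmult_lt_0_compat; [apply Rmult_lt_0_compat|]; lra.
      * lra.
Qed.

Lemma Rabs_sin_le (x : R) : 0 < x -> Rabs (sin x) <= x.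
Proof.
  intros Hx. apply Rabs_le. pose proof (sin_lt_x x Hx). pose proof (SIN_bound x).
  destruct (Rle_lt_dec 1 x); [lra|]. pose proof PI2_3_2.
  pose proof (sin_ge_0 x ltac:(lra) ltac:(lra)). lra.
Qed.

Lemma one_sub_inv_sqr_pos (b : R) : 1 < b -> 0 < 1 - / (b * b).
Proof. intros hb. assert (/ (b * b) < 1) by (rewrite <- Rinv_1; apply Rinv_lt_contravar; nra). lra. Qed.

Section KernelDecay.
Variables (b : R) (K : nat).
Hypothesis hb : 1 < b.
Hypothesis HK : (1 <= K)%nat.
Let L := 2 * INR K * PI.
Let h := / (2 * INR K).
Let q := / (b * b).
Let Q := 8 * (L + 1) * (h * h) / ((1 - q) * (1 - q) * (1 - q)).
Hypothesis Hh1 : (1 + h) * (1 + h) <= (1 + b * b) / 2.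
Hypothesis Hh2 : (1 + q) / 2 <= (1 - h) * (1 - h).

Lemma Rabs_kernel_ft_low (lam : R) : 0 < lam <= / b -> Rabs (kernel_ft L h lam) <= Q * (lam * lam).
Proof.
  intros Hl.
  assert (Hh : 0 < h <= /2) by (split; [apply (h_pos K HK) | apply (h_le_half K HK)]).
  assert (HL : 0 < L) by apply (L_pos K HK).
  pose proof (one_sub_inv_sqr_pos b hb) as Hq. fold q in Hq.
  assert (Hbinv : / b < 1 - h).
  { assert (/ b * / b < (1 - h) * (1 - h)) by (replace (/ b * / b) with q by (unfold q; field; lra); lra).
    destruct (Rlt_le_dec (/ b) (1 - h)) as [|Hge]; [assumption|].
    assert ((1 - h) * (1 - h) <= / b * / b) by (apply Rmult_le_compat; lra). lra. }
  rewrite (kernel_ft_closed K HK) by (fold h; lra).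
  eapply Rle_trans.
  { apply (Rabs_kernel_ft_formula_low b h lam _ L); [lra | lra | lra | exact Hh2 | lra |].
    apply Rabs_sin_le. nra. }
  apply Rmult_le_compat_r; [nra|].
  apply Rdiv_le_compat; [split; nra|]. unfold q in *.
  split; [apply Rmult_lt_0_compat; [apply Rmult_lt_0_compat|]|]; lra.
Qed.

Lemma Rabs_kernel_ft_high (lam : R) : b <= lam -> Rabs (kernel_ft L h lam) <= Q / lam.
Proof.
  intros Hl.
  assert (Hh : 0 < h <= /2) by (split; [apply (h_pos K HK) | apply (h_le_half K HK)]).
  assert (HL : 0 < L) by apply (L_pos K HK).
  pose proof (one_sub_inv_sqr_pos b hb) as Hq. fold q in Hq.
  rewrite (kernel_ft_closed K HK) by (fold h; nra).
  eapply Rle_trans.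
  { apply (Rabs_kernel_ft_formula_high b h lam); [lra | lra | exact Hh1 | lra |].
    apply Rabs_le, SIN_bound. }
  unfold q in *. apply Rdiv_le_compat; [split|lra].
  - apply Rmult_le_pos; [nra|left; apply Rinv_0_lt_compat].
    apply Rmult_lt_0_compat; [apply Rmult_lt_0_compat|]; lra.
  - apply Rdiv_le_compat; [split; nra|].
    split; [apply Rmult_lt_0_compat; [apply Rmult_lt_0_compat|]|]; lra.
Qed.

End KernelDecay.

Definition lac_term (a b c t : R) (j : nat) : R := / a ^ j * cos (b ^ j * t + c).

(* [geom_tail a J] is the sum of [a^-j] over [j > J]. *)
Definition geom_tail (a : R) (J : nat) : R := (/ a) ^ J / (a - 1).

Section LacunarySeries.
Variables a b c : R.
Hypothesis ha : 1 < a.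

Lemma inv_a_pos : 0 < / a.
Proof. apply Rinv_0_lt_compat; lra. Qed.

Lemma inv_a_lt1 : / a < 1.
Proof. rewrite <- Rinv_1. apply Rinv_lt_contravar; lra. Qed.

Lemma Rabs_lac_term_le (t : R) (j : nat) : Rabs (lac_term a b c t j) <= (/ a) ^ j.
Proof.
  unfold lac_term. rewrite Rabs_mult, pow_inv.
  assert (Haj : 0 < / a ^ j) by (apply Rinv_0_lt_compat, pow_lt; lra).
  rewrite (Rabs_pos_eq (/ a ^ j)) by lra.
  assert (Rabs (cos (b ^ j * t + c)) <= 1) by apply Rabs_le, COS_bound.
  nra.
Qed.

Lemma geom_tail_pos (J : nat) : 0 < geom_tail a J.
Proof. unfold geom_tail. apply Rdiv_lt_0_compat; [apply pow_lt, inv_a_pos | lra]. Qed.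

Lemma geom_tail_S (J : nat) : geom_tail a J = (/ a) ^ S J + geom_tail a (S J).
Proof. unfold geom_tail. simpl. field. lra. Qed.

Lemma Rabs_partial_sum_sub_le (t : R) (J n : nat) :
  Rabs (sum_f_R0 (lac_term a b c t) (J + n) - sum_f_R0 (lac_term a b c t) J)
  <= geom_tail a J - geom_tail a (J + n).
Proof.
  induction n as [|n IH].
  - rewrite Nat.add_0_r, !Rminus_diag, Rabs_R0. lra.
  - replace (J + S n)%nat with (S (J + n)) by lia. simpl sum_f_R0.
    replace (sum_f_R0 (lac_term a b c t) (J + n) + lac_term a b c t (S (J + n))
             - sum_f_R0 (lac_term a b c t) J)
      with ((sum_f_R0 (lac_term a b c t) (J + n) - sum_f_R0 (lac_term a b c t) J)
            + lac_term a b c t (S (J + n))) by ring.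
    eapply Rle_trans; [apply Rabs_triang|].
    pose proof (Rabs_lac_term_le t (S (J + n))).
    rewrite (geom_tail_S (J + n)) in IH. lra.
Qed.

Lemma Rabs_partial_sum_sub_le_tail (t : R) (J n : nat) :
  Rabs (sum_f_R0 (lac_term a b c t) (J + n) - sum_f_R0 (lac_term a b c t) J) <= geom_tail a J.
Proof.
  eapply Rle_trans; [apply Rabs_partial_sum_sub_le|].
  pose proof (geom_tail_pos (J + n)). lra.
Qed.

Lemma geom_tail_vanishes (eps : R) : 0 < eps -> exists N, forall n, (n >= N)%nat -> geom_tail a n < eps.
Proof.
  intros He. pose proof inv_a_pos; pose proof inv_a_lt1.
  destruct (pow_lt_1_zero (/ a) ltac:(rewrite Rabs_pos_eq; lra) (eps * (a - 1)) ltac:(nra))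
    as [N HN].
  exists N. intros n Hn. specialize (HN n Hn).
  rewrite Rabs_pos_eq in HN by (left; apply pow_lt; lra).
  unfold geom_tail. apply Rmult_lt_reg_r with (a - 1); [lra|].
  unfold Rdiv. rewrite Rmult_assoc, Rinv_l by lra. lra.
Qed.

Lemma eventually_scaled_geom_tail_le (k : nat) (eps : R) : 0 < eps ->
  exists J, (k <= J)%nat /\ a ^ k * geom_tail a J <= eps.
Proof.
  intros He. assert (Hak : 0 < a ^ k) by (apply pow_lt; lra).
  destruct (geom_tail_vanishes (eps / a ^ k) ltac:(apply Rdiv_lt_0_compat; lra)) as [N HN].
  exists (Nat.max N k). split; [lia|].
  left. apply Rmult_lt_reg_l with (/ a ^ k); [apply Rinv_0_lt_compat; lra|].
  replace (/ a ^ k * (a ^ k * geom_tail a (Nat.max N k))) with (geom_tail a (Nat.max N k))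
    by (field; lra).
  rewrite Rmult_comm. apply HN. lia.
Qed.

Lemma Rabs_series_tail_le (t l : R) (J : nat) : infinite_sum (lac_term a b c t) l ->
  Rabs (l - sum_f_R0 (lac_term a b c t) J) <= geom_tail a J.
Proof.
  intros Hl. apply Rnot_lt_le. intro Hc.
  destruct (Hl (Rabs (l - sum_f_R0 (lac_term a b c t) J) - geom_tail a J)) as [N HN]; [lra|].
  specialize (HN (J + N)%nat ltac:(lia)). unfold Rdist in HN.
  pose proof (Rabs_partial_sum_sub_le_tail t J N).
  pose proof (Rabs_triang (- (sum_f_R0 (lac_term a b c t) (J + N) - l))
                (sum_f_R0 (lac_term a b c t) (J + N) - sum_f_R0 (lac_term a b c t) J)).
  rewrite Rabs_Ropp in H0.
  replace (- (sum_f_R0 (lac_term a b c t) (J + N) - l)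
           + (sum_f_R0 (lac_term a b c t) (J + N) - sum_f_R0 (lac_term a b c t) J))
    with (l - sum_f_R0 (lac_term a b c t) J) in H0 by ring.
  lra.
Qed.

Lemma lac_series_converges (t : R) : exists l, infinite_sum (lac_term a b c t) l.
Proof.
  assert (Hc : Cauchy_crit (sum_f_R0 (lac_term a b c t))).
  { intros eps He. destruct (geom_tail_vanishes eps He) as [N HN].
    exists N. intros n m Hn Hm. unfold Rdist.
    destruct (Nat.le_ge_cases n m) as [H|H].
    - replace m with (n + (m - n))%nat by lia. rewrite Rabs_minus_sym.
      eapply Rle_lt_trans; [apply Rabs_partial_sum_sub_le_tail | apply HN; lia].
    - replace n with (m + (n - m))%nat by lia.
      eapply Rle_lt_trans; [apply Rabs_partial_sum_sub_le_tail | apply HN; lia]. }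
  destruct (Rcomplete.R_complete _ Hc) as [l Hl]. exists l. exact Hl.
Qed.

Lemma lac_sum_bounded (f : R -> R) : (forall t, infinite_sum (lac_term a b c t) (f t)) ->
  bounded_R f.
Proof.
  intros Hf. exists (1 + geom_tail a 0). intros t.
  pose proof (Rabs_series_tail_le t (f t) 0 (Hf t)).
  pose proof (Rabs_lac_term_le t 0). simpl sum_f_R0 in *.
  replace (f t) with ((f t - lac_term a b c t 0) + lac_term a b c t 0) by ring.
  eapply Rle_trans; [apply Rabs_triang | lra].
Qed.

Lemma partial_sum_continuous (n : nat) (x : R) :
  continuity_pt (fun t => sum_f_R0 (lac_term a b c t) n) x.
Proof.
  apply continuity_pt_filterlim.
  apply (ex_derive_continuous (K:=R_AbsRing) (V:=R_NormedModule)).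
  induction n as [|n IH].
  - simpl. unfold lac_term. auto_derive. auto.
  - simpl. apply (ex_derive_plus (fun t => sum_f_R0 (lac_term a b c t) n)); [exact IH|].
    unfold lac_term. auto_derive. auto.
Qed.

Lemma lac_sum_continuous (f : R -> R) : (forall t, infinite_sum (lac_term a b c t) (f t)) ->
  continuity f.
Proof.
  intros Hf x.
  apply (CVU_continuity (fun n t => sum_f_R0 (lac_term a b c t) n) f x (mkposreal 1 Rlt_0_1)).
  - intros eps He. destruct (geom_tail_vanishes eps He) as [N HN].
    exists N. intros n y Hn _.
    eapply Rle_lt_trans; [apply Rabs_series_tail_le, Hf | apply HN; lia].
  - intros; apply partial_sum_continuous.
  - unfold Boule. simpl. rewrite Rminus_diag, Rabs_R0. lra.
Qed.

End LacunarySeries.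

Lemma Rabs_sum_sub_peak_le (u : nat -> R) (Q rho : R) (k : nat) :
  0 < rho < 1 -> 0 <= Q ->
  (forall j, (j < k)%nat -> Rabs (u j) <= Q * rho ^ (k - j)) ->
  (forall j, (k < j)%nat -> Rabs (u j) <= Q * rho ^ (j - k)) ->
  forall J, (k <= J)%nat -> Rabs (sum_f_R0 u J - u k) <= 2 * Q * rho / (1 - rho).
Proof.
  intros Hr HQ Hlt Hgt.
  assert (P : forall J,
    ((J < k)%nat -> Rabs (sum_f_R0 u J) <= Q * rho ^ (k - J) / (1 - rho)) /\
    ((k <= J)%nat -> Rabs (sum_f_R0 u J - u k) <= Q * (2 * rho - rho ^ (J - k + 1)) / (1 - rho))).
  { induction J as [|J [IH1 IH2]]; split; intros HJ; simpl sum_f_R0.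
    - eapply Rle_trans; [apply Hlt; exact HJ|]. rewrite Nat.sub_0_r.
      assert (0 <= rho ^ k) by (left; apply pow_lt; lra).
      unfold Rdiv. rewrite <- (Rmult_1_r (Q * rho ^ k)) at 1.
      apply Rmult_le_compat_l; [nra|]. rewrite <- Rinv_1. apply Rinv_le_contravar; lra.
    - replace k with 0%nat by lia. rewrite Rminus_diag, Rabs_R0. simpl.
      apply Rmult_le_pos; [nra|left; apply Rinv_0_lt_compat; lra].
    - eapply Rle_trans; [apply Rabs_triang|].
      pose proof (IH1 ltac:(lia)). pose proof (Hlt (S J) HJ).
      replace (k - J)%nat with (S (k - S J)) in H by lia. simpl pow in H.
      assert (0 <= rho ^ (k - S J)) by (left; apply pow_lt; lra).
      replace (Q * rho ^ (k - S J) / (1 - rho))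
        with (Q * (rho * rho ^ (k - S J)) / (1 - rho) + Q * rho ^ (k - S J)) by (field; lra).
      lra.
    - destruct (Nat.eq_dec (S J) k) as [E|E].
      + pose proof (IH1 ltac:(lia)). subst k.
        replace (sum_f_R0 u J + u (S J) - u (S J)) with (sum_f_R0 u J) by ring.
        replace (S J - J)%nat with 1%nat in H by lia. replace (S J - S J + 1)%nat with 1%nat by lia.
        eapply Rle_trans; [apply H|]. right. simpl. field. lra.
      + pose proof (IH2 ltac:(lia)). pose proof (Hgt (S J) ltac:(lia)).
        replace (sum_f_R0 u J + u (S J) - u k) with ((sum_f_R0 u J - u k) + u (S J)) by ring.
        eapply Rle_trans; [apply Rabs_triang|].
        replace (S J - k)%nat with (J - k + 1)%nat in H0 by lia.
        replace (S J - k + 1)%nat with (S (J - k + 1)) by lia. simpl pow.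
        replace (Q * (2 * rho - rho * rho ^ (J - k + 1)) / (1 - rho))
          with (Q * (2 * rho - rho ^ (J - k + 1)) / (1 - rho) + Q * rho ^ (J - k + 1))
          by (field; lra).
        lra. }
  intros J HJ. eapply Rle_trans; [apply (proj2 (P J)); exact HJ|].
  assert (0 <= rho ^ (J - k + 1)) by (left; apply pow_lt; lra).
  unfold Rdiv. apply Rmult_le_compat_r; [left; apply Rinv_0_lt_compat; lra | nra].
Qed.

Lemma derivable_pt_lim_linear_le (f : R -> R) (x l eps : R) :
  derivable_pt_lim f x l -> 0 < eps ->
  exists del, 0 < del /\ forall y, Rabs y < del -> Rabs (f (x + y) - f x - l * y) <= eps * Rabs y.
Proof.
  intros Hd He. destruct (Hd eps He) as [del Hdel].
  exists del. split; [apply cond_pos|]. intros y Hy.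
  destruct (Req_dec y 0) as [->|Hy0].
  - rewrite Rplus_0_r, Rabs_R0. replace (f x - f x - l * 0) with 0 by ring. rewrite Rabs_R0. lra.
  - replace (f (x + y) - f x - l * y) with (y * ((f (x + y) - f x) / y - l)) by (field; auto).
    rewrite Rabs_mult, Rmult_comm. apply Rmult_le_compat_r; [apply Rabs_pos|].
    left. apply Hdel; auto.
Qed.

Section NowhereDifferentiable.
Variables a b c : R.
Hypothesis ha : 1 < a.
Hypothesis hab : a <= b.
Variable K : nat.
Hypothesis HK : (2 <= K)%nat.
Let L := 2 * INR K * PI.
Let h := / (2 * INR K).
Let q := / (b * b).
Let Q := 8 * (L + 1) * (h * h) / ((1 - q) * (1 - q) * (1 - q)).
Hypothesis Hh1 : (1 + h) * (1 + h) <= (1 + b * b) / 2.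
Hypothesis Hh2 : (1 + q) / 2 <= (1 - h) * (1 - h).
Hypothesis HQ : 2 * Q * / b / (1 - / b) <= 1.

Variable f : R -> R.
Hypothesis Hf : forall t, infinite_sum (lac_term a b c t) (f t).
Variables t0 l : R.
Hypothesis Hd : derivable_pt_lim f t0 l.

Lemma K_ge1 : (1 <= K)%nat.
Proof. lia. Qed.

Lemma b_gt1 : 1 < b.
Proof. lra. Qed.

Lemma L_gt12 : 12 < L.
Proof.
  unfold L. assert (2 <= INR K) by (apply (le_INR 2); exact HK).
  pose proof PI2_3_2. nra.
Qed.

Lemma Q_nonneg : 0 <= Q.
Proof.
  unfold Q. pose proof (one_sub_inv_sqr_pos b b_gt1) as Hq. fold q in Hq. pose proof L_gt12.
  apply Rmult_le_pos; [apply Rmult_le_pos; [lra | nra]|].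
  left; apply Rinv_0_lt_compat. apply Rmult_lt_0_compat; [apply Rmult_lt_0_compat|]; lra.
Qed.

Lemma pow_b_pos (k : nat) : 0 < b ^ k.
Proof. apply pow_lt; lra. Qed.

Definition kernel_coeff (k : nat) (al : R) (j : nat) : R :=
  / a ^ j * (cos (b ^ j * t0 + c + b ^ j / b ^ k * al) * kernel_ft L h (b ^ j / b ^ k)).

Lemma is_RInt_kernel_lac_term (k : nat) (al : R) (j : nat) :
  is_RInt (fun u => kernel h u * lac_term a b c (t0 + (u + al) / b ^ k) j) (-L) L
    (kernel_coeff k al j).
Proof.
  unfold kernel_coeff. pose proof (pow_b_pos k).
  set (th := b ^ j * t0 + c + b ^ j / b ^ k * al).
  apply is_RInt_ext_val
    with (fun u => / a ^ j * (kernel h u * cos (th + b ^ j / b ^ k * u)))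
         (/ a ^ j * (cos th * kernel_ft L h (b ^ j / b ^ k))).
  - intros u. unfold lac_term, th.
    replace (b ^ j * (t0 + (u + al) / b ^ k) + c)
      with (b ^ j * t0 + c + b ^ j / b ^ k * al + b ^ j / b ^ k * u) by (field; lra).
    ring.
  - reflexivity.
  - apply (is_RInt_scal (V:=R_NormedModule)), is_RInt_kernel_cos_affine.
Qed.

Lemma is_RInt_kernel_partial_sum (k : nat) (al : R) (J : nat) :
  is_RInt (fun u => kernel h u * sum_f_R0 (lac_term a b c (t0 + (u + al) / b ^ k)) J) (-L) L
    (sum_f_R0 (kernel_coeff k al) J).
Proof.
  induction J as [|J IH]; simpl; [apply is_RInt_kernel_lac_term|].
  apply is_RInt_ext_val
    with (fun u => kernel h u * sum_f_R0 (lac_term a b c (t0 + (u + al) / b ^ k)) J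
                   + kernel h u * lac_term a b c (t0 + (u + al) / b ^ k) (S J))
         (sum_f_R0 (kernel_coeff k al) J + kernel_coeff k al (S J)).
  - intros; ring.
  - reflexivity.
  - apply (is_RInt_plus (V:=R_NormedModule)); [exact IH | apply is_RInt_kernel_lac_term].
Qed.

Lemma is_RInt_kernel_tangent (k : nat) (al : R) :
  is_RInt (fun u => kernel h u * (f t0 + l * ((u + al) / b ^ k))) (-L) L 0.
Proof.
  pose proof (pow_b_pos k).
  apply is_RInt_ext_val
    with (fun u => kernel h u * ((f t0 + l * al / b ^ k) + (l / b ^ k) * u)) 0.
  - intros u. f_equal. field. lra.
  - reflexivity.
  - apply (is_RInt_resonant_kernel_affine K K_ge1).
Qed.

Lemma Rabs_scaled_coeff_below (k : nat) (al : R) (j : nat) : (j < k)%nat ->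
  Rabs (a ^ k * kernel_coeff k al j) <= Q * (/ b) ^ (k - j).
Proof.
  intros Hj. unfold kernel_coeff. pose proof b_gt1.
  set (d := (k - j)%nat). assert (Ek : k = (j + d)%nat) by (unfold d; lia).
  assert (Hlam : b ^ j / b ^ k = (/ b) ^ d).
  { rewrite Ek, pow_add, pow_inv. field. split; apply pow_nonzero; lra. }
  assert (Hak : a ^ k * / a ^ j = a ^ d).
  { rewrite Ek, pow_add. field. apply pow_nonzero; lra. }
  assert (Hmu : 0 < (/ b) ^ d <= / b).
  { split; [apply pow_lt, Rinv_0_lt_compat; lra|].
    replace d with (S (d - 1)) by (unfold d; lia). simpl.
    assert (0 < / b < 1) by (split; [apply Rinv_0_lt_compat | rewrite <- Rinv_1; apply Rinv_lt_contravar]; lra).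
    assert ((/ b) ^ (d - 1) <= 1) by (rewrite <- (pow1 (d - 1)); apply pow_incr; lra). nra. }
  pose proof (Rabs_kernel_ft_low b K b_gt1 K_ge1 Hh2 ((/ b) ^ d) Hmu) as HC.
  rewrite Hlam.
  replace (a ^ k * (/ a ^ j * (cos (b ^ j * t0 + c + (/ b) ^ d * al) * kernel_ft L h ((/ b) ^ d))))
    with (a ^ d * cos (b ^ j * t0 + c + (/ b) ^ d * al) * kernel_ft L h ((/ b) ^ d))
    by (rewrite <- Hak; ring).
  rewrite !Rabs_mult, (Rabs_pos_eq (a ^ d)) by (left; apply pow_lt; lra).
  assert (Rabs (cos (b ^ j * t0 + c + (/ b) ^ d * al)) <= 1) by apply Rabs_le, COS_bound.
  assert (a ^ d <= b ^ d) by (apply pow_incr; lra).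
  assert (Hbd : b ^ d * (/ b) ^ d = 1) by (rewrite pow_inv; field; apply pow_nonzero; lra).
  assert (0 < a ^ d) by (apply pow_lt; lra).
  apply Rle_trans with (b ^ d * 1 * (Q * ((/ b) ^ d * (/ b) ^ d))).
  - apply Rmult_le_compat; [apply Rmult_le_pos; [lra|apply Rabs_pos] | apply Rabs_pos | | exact HC].
    apply Rmult_le_compat; [lra | apply Rabs_pos | lra | lra].
  - right. transitivity (Q * (/ b) ^ d * (b ^ d * (/ b) ^ d)); [ring|]. rewrite Hbd. ring.
Qed.

Lemma Rabs_scaled_coeff_above (k : nat) (al : R) (j : nat) : (k < j)%nat ->
  Rabs (a ^ k * kernel_coeff k al j) <= Q * (/ b) ^ (j - k).
Proof.
  intros Hj. unfold kernel_coeff. pose proof b_gt1.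
  set (d := (j - k)%nat). assert (Ej : j = (k + d)%nat) by (unfold d; lia).
  assert (Hlam : b ^ j / b ^ k = b ^ d).
  { rewrite Ej, pow_add. field. apply pow_nonzero; lra. }
  assert (Hak : a ^ k * / a ^ j = / a ^ d).
  { rewrite Ej, pow_add. field. split; apply pow_nonzero; lra. }
  assert (Hbd : b <= b ^ d).
  { replace d with (S (d - 1)) by (unfold d; lia). simpl.
    assert (1 <= b ^ (d - 1)) by (rewrite <- (pow1 (d - 1)); apply pow_incr; lra). nra. }
  pose proof (Rabs_kernel_ft_high b K b_gt1 K_ge1 Hh1 (b ^ d) Hbd) as HC.
  rewrite Hlam.
  replace (a ^ k * (/ a ^ j * (cos (b ^ j * t0 + c + b ^ d * al) * kernel_ft L h (b ^ d))))
    with (/ a ^ d * cos (b ^ j * t0 + c + b ^ d * al) * kernel_ft L h (b ^ d))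
    by (rewrite <- Hak; ring).
  assert (1 <= a ^ d) by (rewrite <- (pow1 d); apply pow_incr; lra).
  assert (/ a ^ d <= 1) by (rewrite <- Rinv_1; apply Rinv_le_contravar; lra).
  assert (0 < / a ^ d) by (apply Rinv_0_lt_compat; lra).
  rewrite !Rabs_mult, (Rabs_pos_eq (/ a ^ d)) by lra.
  assert (Rabs (cos (b ^ j * t0 + c + b ^ d * al)) <= 1) by apply Rabs_le, COS_bound.
  apply Rle_trans with (1 * 1 * (Q / b ^ d)).
  - apply Rmult_le_compat; [apply Rmult_le_pos; [lra|apply Rabs_pos] | apply Rabs_pos | | exact HC].
    apply Rmult_le_compat; [lra | apply Rabs_pos | lra | lra].
  - rewrite pow_inv. right. field. apply pow_nonzero; lra.
Qed.

Lemma scaled_coeff_peak (k : nat) (al : R) :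
  a ^ k * kernel_coeff k al k = cos (b ^ k * t0 + c + al) * (L / 2).
Proof.
  unfold kernel_coeff. pose proof (pow_b_pos k).
  assert (Hk1 : b ^ k / b ^ k = 1) by (field; lra).
  pose proof (kernel_ft_1 K K_ge1) as E1. fold L h in E1.
  rewrite Hk1, E1, Rmult_1_l.
  field. apply pow_nonzero; lra.
Qed.

Lemma Rabs_scaled_coeff_sum_sub_peak_le (k : nat) (al : R) (J : nat) : (k <= J)%nat ->
  Rabs (a ^ k * sum_f_R0 (kernel_coeff k al) J - cos (b ^ k * t0 + c + al) * (L / 2)) <= 1.
Proof.
  intros HJ. pose proof b_gt1.
  assert (Hr : 0 < / b < 1).
  { split; [apply Rinv_0_lt_compat | rewrite <- Rinv_1; apply Rinv_lt_contravar]; lra. }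
  rewrite scal_sum, <- (scaled_coeff_peak k al), (Rmult_comm (a ^ k)).
  eapply Rle_trans; [|exact HQ].
  apply (Rabs_sum_sub_peak_le (fun j => kernel_coeff k al j * a ^ k) Q (/ b) k Hr Q_nonneg);
    [intros j Hj; rewrite Rmult_comm; apply Rabs_scaled_coeff_below
    |intros j Hj; rewrite Rmult_comm; apply Rabs_scaled_coeff_above | ]; auto.
Qed.

Lemma Rabs_kernel_coeff_sum_le (k : nat) (al eps : R) (J : nat) : 0 <= al <= 2 -> 0 <= eps ->
  (forall y, Rabs y <= (L + 2) / b ^ k -> Rabs (f (t0 + y) - f t0 - l * y) <= eps * Rabs y) ->
  Rabs (sum_f_R0 (kernel_coeff k al) J) <= 2 * L * (geom_tail a J + eps * ((L + 2) / b ^ k)).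
Proof.
  intros Hal He Hlin. pose proof L_gt12. pose proof (pow_b_pos k) as HB.
  set (B := b ^ k) in *.
  set (F u := kernel h u
              * (sum_f_R0 (lac_term a b c (t0 + (u + al) / B)) J - (f t0 + l * ((u + al) / B)))).
  assert (HI : is_RInt F (-L) L (sum_f_R0 (kernel_coeff k al) J)).
  { apply is_RInt_ext_val
      with (fun u => kernel h u * sum_f_R0 (lac_term a b c (t0 + (u + al) / B)) J
                     - kernel h u * (f t0 + l * ((u + al) / B)))
           (sum_f_R0 (kernel_coeff k al) J - 0).
    - intros u. unfold F. ring.
    - ring.
    - apply (is_RInt_minus (V:=R_NormedModule));
        [apply is_RInt_kernel_partial_sum | apply is_RInt_kernel_tangent]. }
  assert (Hpt : forall u, -L <= u <= L -> Rabs (F u) <= geom_tail a J + eps * ((L + 2) / B)).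
  { intros u Hu. unfold F. rewrite Rabs_mult.
    set (y := (u + al) / B).
    assert (Hy : Rabs y <= (L + 2) / B).
    { unfold y, Rdiv. rewrite Rabs_mult, (Rabs_pos_eq (/ B)) by (left; apply Rinv_0_lt_compat; lra).
      apply Rmult_le_compat_r; [left; apply Rinv_0_lt_compat; lra | apply Rabs_le; lra]. }
    pose proof (Rabs_series_tail_le a b c ha (t0 + y) (f (t0 + y)) J (Hf (t0 + y))) as Htail.
    pose proof (Hlin y Hy) as Htan.
    assert (Rabs (sum_f_R0 (lac_term a b c (t0 + y)) J - (f t0 + l * y))
            <= geom_tail a J + eps * ((L + 2) / B)).
    { pose proof (Rabs_triang (- (f (t0 + y) - sum_f_R0 (lac_term a b c (t0 + y)) J))
                              (f (t0 + y) - f t0 - l * y)) as Htri.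
      rewrite Rabs_Ropp in Htri.
      replace (- (f (t0 + y) - sum_f_R0 (lac_term a b c (t0 + y)) J) + (f (t0 + y) - f t0 - l * y))
        with (sum_f_R0 (lac_term a b c (t0 + y)) J - (f t0 + l * y)) in Htri by ring.
      assert (eps * Rabs y <= eps * ((L + 2) / B)) by (apply Rmult_le_compat_l; lra).
      lra. }
    pose proof (Rabs_kernel_le h u).
    rewrite <- (Rmult_1_l (geom_tail a J + _)).
    apply Rmult_le_compat; [apply Rabs_pos | apply Rabs_pos | lra | lra]. }
  rewrite <- (is_RInt_unique F (-L) L _ HI).
  replace (2 * L) with (L - - L) by ring.
  apply abs_RInt_le_const; [lra | exists (sum_f_R0 (kernel_coeff k al) J); exact HI | exact Hpt].
Qed.

Lemma eventually_scaled_coeff_sum_small (al : R) : 0 <= al <= 2 ->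
  exists k0, forall k, (k >= k0)%nat ->
  exists J, (k <= J)%nat /\ a ^ k * Rabs (sum_f_R0 (kernel_coeff k al) J) <= / 2.
Proof.
  intros Hal. pose proof L_gt12. pose proof b_gt1.
  set (eps := / (8 * L * (L + 2))).
  assert (Heps : 0 < eps) by (unfold eps; apply Rinv_0_lt_compat; nra).
  destruct (derivable_pt_lim_linear_le f t0 l eps Hd Heps) as [del [Hdel Hlin]].
  assert (Hrb : Rabs (/ b) < 1).
  { rewrite Rabs_pos_eq by (left; apply Rinv_0_lt_compat; lra).
    rewrite <- Rinv_1. apply Rinv_lt_contravar; lra. }
  destruct (pow_lt_1_zero (/ b) Hrb (del / (L + 2)) ltac:(apply Rdiv_lt_0_compat; lra))
    as [k0 Hk0].
  exists k0. intros k Hk. specialize (Hk0 k Hk).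
  pose proof (pow_b_pos k) as HB.
  rewrite Rabs_pos_eq, pow_inv in Hk0 by (left; apply pow_lt, Rinv_0_lt_compat; lra).
  assert (Hsmall : (L + 2) / b ^ k < del).
  { apply Rmult_lt_reg_r with (/ (L + 2)); [apply Rinv_0_lt_compat; lra|].
    replace ((L + 2) / b ^ k * / (L + 2)) with (/ b ^ k) by (field; lra). exact Hk0. }
  assert (Hak : 0 < a ^ k) by (apply pow_lt; lra).
  assert (HaB : a ^ k / b ^ k <= 1).
  { apply Rmult_le_reg_r with (b ^ k); [lra|]. unfold Rdiv.
    rewrite Rmult_assoc, Rinv_l, Rmult_1_r, Rmult_1_l by lra. apply pow_incr; lra. }
  destruct (eventually_scaled_geom_tail_le a ha k (/ (8 * L)) ltac:(apply Rinv_0_lt_compat; lra))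
    as [J [HJ HtJ]].
  exists J. split; [exact HJ|].
  eapply Rle_trans.
  { apply Rmult_le_compat_l; [lra|].
    apply (Rabs_kernel_coeff_sum_le k al eps J Hal); [lra|].
    intros y Hy. apply Hlin. lra. }
  replace (a ^ k * (2 * L * (geom_tail a J + eps * ((L + 2) / b ^ k))))
    with (2 * L * (a ^ k * geom_tail a J) + 2 * L * eps * (L + 2) * (a ^ k / b ^ k))
    by (field; lra).
  replace (2 * L * eps * (L + 2)) with (/ 4) by (unfold eps; field; lra).
  assert (2 * L * (a ^ k * geom_tail a J) <= / 4).
  { apply Rle_trans with (2 * L * / (8 * L)); [apply Rmult_le_compat_l; lra | right; field; lra]. }
  assert (0 <= a ^ k / b ^ k) by (apply Rdiv_le_0_compat; lra).
  lra.
Qed.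

Lemma eventually_cos_small (al : R) : 0 <= al <= 2 ->
  exists k0, forall k, (k >= k0)%nat -> Rabs (cos (b ^ k * t0 + c + al)) * (L / 2) <= 3 / 2.
Proof.
  intros Hal. pose proof L_gt12.
  destruct (eventually_scaled_coeff_sum_small al Hal) as [k0 Hk0].
  exists k0. intros k Hk. destruct (Hk0 k Hk) as [J [HJ Hsmall]].
  pose proof (Rabs_scaled_coeff_sum_sub_peak_le k al J HJ) as Hpeak.
  pose proof (Rabs_triang (- (a ^ k * sum_f_R0 (kernel_coeff k al) J
                              - cos (b ^ k * t0 + c + al) * (L / 2)))
                          (a ^ k * sum_f_R0 (kernel_coeff k al) J)) as Htri.
  rewrite Rabs_Ropp, Rabs_mult, (Rabs_pos_eq (a ^ k)) in Htri by (left; apply pow_lt; lra).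
  replace (- (a ^ k * sum_f_R0 (kernel_coeff k al) J - cos (b ^ k * t0 + c + al) * (L / 2))
           + a ^ k * sum_f_R0 (kernel_coeff k al) J)
    with (cos (b ^ k * t0 + c + al) * (L / 2)) in Htri by ring.
  rewrite Rabs_mult, (Rabs_pos_eq (L / 2)) in Htri by lra.
  lra.
Qed.

End NowhereDifferentiable.

Lemma exists_admissible_K (b : R) : 1 < b ->
  exists K : nat, (2 <= K)%nat /\
    let L := 2 * INR K * PI in let h := / (2 * INR K) in let q := / (b * b) in
    (1 + h) * (1 + h) <= (1 + b * b) / 2 /\ (1 + q) / 2 <= (1 - h) * (1 - h) /\
    2 * (8 * (L + 1) * (h * h) / ((1 - q) * (1 - q) * (1 - q))) * / b / (1 - / b) <= 1.
Proof.
  intros hb.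
  set (q := / (b * b)).
  assert (Hq : q * (b * b) = 1) by (unfold q; field; lra).
  assert (Hq0 : 0 < q) by (unfold q; apply Rinv_0_lt_compat; nra).
  assert (Hc0 : 0 < 1 - q) by (apply (one_sub_inv_sqr_pos b hb)).
  set (X := (1 - q) * (1 - q) * (1 - q) * (b - 1)).
  assert (HX : 0 < X) by (unfold X; repeat apply Rmult_lt_0_compat; lra).
  destruct (INR_unbounded (2 + 6 / (1 - q) + 48 / X)) as [K HKx].
  assert (H6 : 0 < 6 / (1 - q)) by (apply Rdiv_lt_0_compat; lra).
  assert (H48 : 0 < 48 / X) by (apply Rdiv_lt_0_compat; lra).
  exists K. split.
  { assert (INR 1 < INR K) by (simpl; lra). apply INR_lt in H. lia. }
  cbv zeta. set (k := INR K) in *.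
  assert (HKc : 6 < k * (1 - q)).
  { apply Rmult_lt_reg_r with (/ (1 - q)); [apply Rinv_0_lt_compat; lra|].
    replace (k * (1 - q) * / (1 - q)) with k by (field; lra). unfold Rdiv in H6. lra. }
  assert (HKX : 48 < k * X).
  { apply Rmult_lt_reg_r with (/ X); [apply Rinv_0_lt_compat; lra|].
    replace (k * X * / X) with k by (field; lra). unfold Rdiv in H48. lra. }
  set (h := / (2 * k)).
  assert (Hh0 : 0 < h) by (unfold h; apply Rinv_0_lt_compat; lra).
  assert (Hh : h <= (1 - q) / 6).
  { assert (h * (1 - q) * k * 2 = 1 - q) by (unfold h; field; lra). nra. }
  assert (Hh4 : h <= / 4) by (unfold h; apply Rinv_le_contravar; lra).
  assert (Hbq : 1 - q <= b * b - 1) by nra.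
  pose proof PI_4. pose proof PI2_3_2.
  split; [nra|split; [nra|]].
  replace (2 * (8 * (2 * k * PI + 1) * (h * h) / ((1 - q) * (1 - q) * (1 - q))) * / b / (1 - / b))
    with (4 * (2 * k * PI + 1) / (k * (k * X))) by (unfold h, X; field; repeat split; lra).
  apply Rmult_le_reg_r with (k * (k * X)); [nra|].
  unfold Rdiv. rewrite Rmult_assoc, Rinv_l by nra. nra.
Qed.

Lemma lac_sum_nowhere_differentiable (a b c : R) (f : R -> R) (t0 : R) : 1 < a -> a <= b ->
  (forall t, infinite_sum (lac_term a b c t) (f t)) -> ~ differentiable_at f t0.
Proof.
  intros ha hab Hf [l Hd].
  destruct (exists_admissible_K b ltac:(lra)) as [K [HK Hadm]]. cbv zeta in Hadm.
  destruct Hadm as [Hh1 [Hh2 HQ]].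
  pose proof (L_gt12 K HK). pose proof PI2_3_2. pose proof PI_4.
  destruct (eventually_cos_small a b c ha hab K HK Hh1 Hh2 HQ f Hf t0 l Hd 0 ltac:(lra))
    as [k0 Hk0].
  destruct (eventually_cos_small a b c ha hab K HK Hh1 Hh2 HQ f Hf t0 l Hd (PI / 2) ltac:(lra))
    as [k1 Hk1].
  specialize (Hk0 (Nat.max k0 k1) ltac:(lia)). specialize (Hk1 (Nat.max k0 k1) ltac:(lia)).
  set (x := b ^ Nat.max k0 k1 * t0 + c) in *.
  rewrite Rplus_0_r in Hk0.
  rewrite cos_plus, cos_PI2, sin_PI2, Rmult_0_r, Rmult_1_r, Rminus_0_l, Rabs_Ropp in Hk1.
  assert (Hc : Rabs (cos x) < / 4) by nra.
  assert (Hs : Rabs (sin x) < / 4) by nra.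
  pose proof (sin2_cos2 x). unfold Rsqr in *.
  apply Rabs_def2 in Hc. apply Rabs_def2 in Hs. nra.
Qed.

Lemma infinite_sum_ext (u v : nat -> R) (l : R) :
  (forall j, u j = v j) -> infinite_sum u l -> infinite_sum v l.
Proof.
  intros E H eps He. destruct (H eps He) as [N HN]. exists N. intros n Hn.
  rewrite <- (sum_eq u v n) by (intros; apply E). apply HN; auto.
Qed.

Lemma W_term_lac_term (a b t : R) (j : nat) : W_term a b t j = lac_term a b 0 t j.
Proof. unfold W_term, lac_term. rewrite Rplus_0_r. reflexivity. Qed.

Lemma S_term_lac_term (a b t : R) (j : nat) : S_term a b t j = lac_term a b (- (PI / 2)) t j.
Proof.
  unfold S_term, lac_term. f_equal.
  replace (b ^ j * t + - (PI / 2)) with (b ^ j * t - PI / 2) by ring.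
  rewrite cos_minus, cos_PI2, sin_PI2. ring.
Qed.

Lemma lac_sum_properties (a b c : R) (g : R -> R) : 1 < a -> a <= b ->
  (forall t, infinite_sum (lac_term a b c t) (g t)) ->
  bounded_R g /\ continuity g /\ forall t0 : R, ~ differentiable_at g t0.
Proof.
  intros ha hab Hg. split; [|split].
  - exact (lac_sum_bounded a b c ha g Hg).
  - exact (lac_sum_continuous a b c ha g Hg).
  - intros t0. exact (lac_sum_nowhere_differentiable a b c g t0 ha hab Hg).
Qed.

Theorem theorem1p1 (a b : R) (ha : 1 < a) (hab : a <= b) :
  (forall t : R, exists l : R, infinite_sum (W_term a b t) l) /\
  (forall t : R, exists l : R, infinite_sum (S_term a b t) l) /\
  (forall W : R -> R, (forall t : R, infinite_sum (W_term a b t) (W t)) ->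
     bounded_R W /\ continuity W /\ forall t0 : R, ~ differentiable_at W t0) /\
  (forall S : R -> R, (forall t : R, infinite_sum (S_term a b t) (S t)) ->
     bounded_R S /\ continuity S /\ forall t0 : R, ~ differentiable_at S t0).
Proof.
  split; [|split; [|split]].
  - intros t. destruct (lac_series_converges a b 0 ha t) as [l Hl]. exists l.
    apply (infinite_sum_ext _ _ l (fun j => eq_sym (W_term_lac_term a b t j)) Hl).
  - intros t. destruct (lac_series_converges a b (- (PI / 2)) ha t) as [l Hl]. exists l.
    apply (infinite_sum_ext _ _ l (fun j => eq_sym (S_term_lac_term a b t j)) Hl).
  - intros W HW. apply (lac_sum_properties a b 0 W ha hab). intros t.
    apply (infinite_sum_ext _ _ _ (W_term_lac_term a b t) (HW t)).
  - intros S HS. apply (lac_sum_properties a b (- (PI / 2)) S ha hab). intros t.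
    apply (infinite_sum_ext _ _ _ (S_term_lac_term a b t) (HS t)).
Qed.
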